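(* Let $(X,\widetilde{\tau},\mathfrak{a}_E,E)$ be a soft aura topological space. If it is soft $\mathfrak{a}$-$T_3$ then it is soft $\mathfrak{a}$-$T_2$; it is soft $\mathfrak{a}$-$T_2$ if and only if it is soft $\mathfrak{a}$-$T_1$; and if it is soft $\mathfrak{a}$-$T_1$ then it is soft $\mathfrak{a}$-$T_0$.
   Context: For a nonempty set $X$ and nonempty parameter set $E$, a soft set is a map $F:E\to\mathcal{P}(X)$, written $(F,E)$. A soft topology $\widetilde{\tau}$ is a family of soft sets containing the soft sets with all values $\emptyset$ and all values $X$, closed under arbitrary parameterwise unions and finite parameterwise intersections. A soft scope function is a map $\mathfrak{a}_E:X\to\widetilde{\tau}$ with $x\in\mathfrak{a}_E(x)(e)$ for all $x\in X,e\in E$; $(X,\widetilde{\tau},\mathfrak{a}_E,E)$ is a soft aura topological space. $\mathrm{int}_{\mathfrak{a}}(G,E)(e)=\{x:\mathfrak{a}_E(x)(e)\subseteq G(e)\}$; $(G,E)$ is soft $\mathfrak{a}$-open if $\mathrm{int}_{\mathfrak{a}}(G,E)=(G,E)$ and soft $\mathfrak{a}$-closed if its parameterwise complement is soft $\mathfrak{a}$-open. The space is: soft $\mathfrak{a}$-$T_0$ if for all distinct $x,y$ there is $e\in E$ with $y\notin\mathfrak{a}_E(x)(e)$ or $x\notin\mathfrak{a}_E(y)(e)$; soft $\mathfrak{a}$-$T_1$ if for all distinct $x,y$ and all $e$, $y\notin\mathfrak{a}_E(x)(e)$ and $x\notin\mathfrak{a}_E(y)(e)$; soft $\mathfrak{a}$-$T_2$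 if for all distinct $x,y$ and all $e$, $\mathfrak{a}_E(x)(e)\cap\mathfrak{a}_E(y)(e)=\emptyset$; soft $\mathfrak{a}$-regular if for every $x\in X$, $e\in E$ and soft $\mathfrak{a}$-closed $(C,E)$ with $x\notin C(e)$ there are soft $\mathfrak{a}$-open $(U,E),(V,E)$ with $x\in U(e)$, $C(e)\subseteq V(e)$, $U(e)\cap V(e)=\emptyset$; soft $\mathfrak{a}$-$T_3$ if soft $\mathfrak{a}$-regular and soft $\mathfrak{a}$-$T_1$. *)

Set Implicit Arguments.

Definition soft_set (X E : Type) := E -> X -> Prop.

Definition soft_empty (X E : Type) : soft_set X E := fun _ _ => False.
Definition soft_full (X E : Type) : soft_set X E := fun _ _ => True.

Record soft_topology (X E : Type) (tau : soft_set X E -> Prop) : Prop := {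
  st_empty : tau (@soft_empty X E);
  st_full  : tau (@soft_full X E);
  st_union : forall (I : Type) (G : I -> soft_set X E),
      (forall i, tau (G i)) ->
      tau (fun e x => exists i, G i e x);
  st_inter : forall F G : soft_set X E,
      tau F -> tau G -> tau (fun e x => F e x /\ G e x)
}.

Definition soft_scope (X E : Type) (tau : soft_set X E -> Prop)
  (a : X -> soft_set X E) : Prop :=
  (forall x, tau (a x)) /\ (forall x e, a x e x).

Definition aint (X E : Type) (a : X -> soft_set X E) (G : soft_set X E)
  : soft_set X E :=
  fun e x => forall y, a x e y -> G e y.

Definition soft_a_open (X E : Type) (a : X -> soft_set X E) (G : soft_set X E)
  : Prop := aint a G = G.

Definition soft_compl (X E : Type) (G : soft_set X E) : soft_set X E :=
  fun e x => ~ G e x.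

Definition soft_a_closed (X E : Type) (a : X -> soft_set X E) (C : soft_set X E)
  : Prop := soft_a_open a (soft_compl C).

Definition soft_a_T0 (X E : Type) (a : X -> soft_set X E) : Prop :=
  forall x y : X, x <> y -> exists e : E, ~ a x e y \/ ~ a y e x.

Definition soft_a_T1 (X E : Type) (a : X -> soft_set X E) : Prop :=
  forall x y : X, x <> y -> forall e : E, ~ a x e y /\ ~ a y e x.

Definition soft_a_T2 (X E : Type) (a : X -> soft_set X E) : Prop :=
  forall x y : X, x <> y -> forall e : E, forall z, ~ (a x e z /\ a y e z).

Definition soft_a_regular (X E : Type) (a : X -> soft_set X E) : Prop :=
  forall (x : X) (e : E) (C : soft_set X E),
    soft_a_closed a C -> ~ C e x ->
    exists U V : soft_set X E,
      soft_a_open a U /\ soft_a_open a V /\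
      U e x /\ (forall z, C e z -> V e z) /\ (forall z, ~ (U e z /\ V e z)).

Definition soft_a_T3 (X E : Type) (a : X -> soft_set X E) : Prop :=
  soft_a_regular a /\ soft_a_T1 a.

(** Under T1 a scope [a x e] contains no point other than [x], so scopes of
    distinct points are disjoint (T2). Conversely, since every scope contains
    its centre, disjoint scopes cannot contain each other's centres (T1).
    T3 includes T1 by definition, and T1 gives T0 as soon as [E] is inhabited. *)

From Stdlib Require Import Classical.

Section SoftAuraSeparation.

Variables (X E : Type) (a : X -> soft_set X E).

Lemma soft_a_T1_scope_eq {x z : X} {e : E} :
  soft_a_T1 a -> a x e z -> z = x.
Proof.
  intros HT1 Hxz.
  apply NNPP; intro Hzx.
  exact (proj1 (HT1 x z (fun Hxz' => Hzx (eq_sym Hxz')) e) Hxz).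
Qed.

Lemma soft_a_T1_T2 : soft_a_T1 a -> soft_a_T2 a.
Proof.
  intros HT1 x y Hxy e z [Hxz Hyz].
  pose proof (soft_a_T1_scope_eq HT1 Hxz) as ->.
  exact (proj2 (HT1 x y Hxy e) Hyz).
Qed.

Lemma soft_a_T2_T1 : (forall x e, a x e x) -> soft_a_T2 a -> soft_a_T1 a.
Proof.
  intros scope_refl HT2 x y Hxy e; split; intro Hin.
  - exact (HT2 x y Hxy e y (conj Hin (scope_refl y e))).
  - exact (HT2 x y Hxy e x (conj (scope_refl x e) Hin)).
Qed.

Lemma soft_a_T3_T2 : soft_a_T3 a -> soft_a_T2 a.
Proof. intros [_ HT1]; exact (soft_a_T1_T2 HT1). Qed.

Lemma soft_a_T1_T0 : E -> soft_a_T1 a -> soft_a_T0 a.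
Proof. intros e0 HT1 x y Hxy; exists e0; left; exact (proj1 (HT1 x y Hxy e0)). Qed.

End SoftAuraSeparation.

Theorem theorem6p5 (X E : Type) (x0 : X) (e0 : E)
  (tau : soft_set X E -> Prop) (a : X -> soft_set X E)
  (Htau : soft_topology tau) (Ha : soft_scope tau a) :
  (soft_a_T3 a -> soft_a_T2 a) /\
  (soft_a_T2 a <-> soft_a_T1 a) /\
  (soft_a_T1 a -> soft_a_T0 a).
Proof.
  destruct Ha as [_ scope_refl].
  split; [| split; [split |]].
  - exact (@soft_a_T3_T2 X E a).
  - exact (@soft_a_T2_T1 X E a scope_refl).
  - exact (@soft_a_T1_T2 X E a).
  - exact (@soft_a_T1_T0 X E a e0).
Qed.
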